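(* Let $\mathbf{C}$ be a class of independence structures that contains a pregeometry independence structure $\mathcal{S}_{(M,\mathrm{cl})}$ for some pregeometry $(M,\mathrm{cl})$ satisfying (P1), (P2), (P3). Then for every set $\Sigma$ of independence atoms over $V$ and every independence atom $\phi$ over $V$, $$\Sigma\vdash_{\mathcal{I}}\phi\iff\Sigma\models_{\mathbf{C}}\phi.$$
   Context: Fix a countably infinite set $V$ of variables. An independence atom over $V$ is $\vec x\perp\vec y$ with $\vec x,\vec y$ finite (possibly empty) sequences of variables from $V$; concatenation is $\vec x\vec y$. $\Sigma\vdash_{\mathcal{I}}\phi$ means $\phi$ lies in the smallest set of independence atoms containing $\Sigma$ and closed under the rules: (a) $\vec x\perp\emptyset$; (b) from $\vec x\perp\vec y$ infer $\vec y\perp\vec x$; (c) from $\vec x\perp\vec y\vec z$ infer $\vec x\perp\vec y$; (d) from $\vec x\perp\vec y$ and $\vec x\vec y\perp\vec z$ infer $\vec x\perp\vec y\vec z$; (e) for a single variable $x$, from $x\perp x$ infer $x\perp\vec y$; (f) from $\vec x\perp\vec y$ infer $\vec u\perp\vec v$ for permutations $\vec u,\vec v$ of $\vec x,\vec y$; (g) from $\vec x y\vec z\perp\vec w$ infer $\vec x yy\vec z\perp\vec w$. An independence structure is a pair $(I,\perp)$, $I$ nonempty, $\perp$ a binary relation on finite subsets of $I$ such that (writing $\mathbf{x}\mathbf{y}=\mathbf{x}\cup\mathbf{y}$): (I1) $\mathbf{x}\perp\emptyset$; (I2) $\mathbf{x}\perp\mathbf{y}\Rightarrow\mathbf{y}\perp\mathbf{x}$;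 (I3) $\mathbf{x}\perp\mathbf{y}\mathbf{z}\Rightarrow\mathbf{x}\perp\mathbf{y}$; (I4) $\mathbf{x}\perp\mathbf{y}$ and $\mathbf{x}\mathbf{y}\perp\mathbf{z}$ imply $\mathbf{x}\perp\mathbf{y}\mathbf{z}$; (I5) $\mathbf{x}\perp\mathbf{x}\Rightarrow\mathbf{x}\perp\mathbf{y}$. Assignments are maps $s:V\to I$ with $s((x_0,\dots,x_{n-1}))=\{s(x_0),\dots,s(x_{n-1})\}$; $s$ satisfies $\vec x\perp\vec y$ iff $s(\vec x)\perp s(\vec y)$; $\Sigma\models_{\mathbf{C}}\phi$ means every assignment into every structure of $\mathbf{C}$ satisfying $\Sigma$ satisfies $\phi$. A pregeometry is a set $M$ with a closure operator $\mathrm{cl}$ (extensive, monotone, idempotent) satisfying Exchange (if $a\in\mathrm{cl}(A\cup\{b\})\setminus\mathrm{cl}(A)$ then $b\in\mathrm{cl}(A\cup\{a\})$) and Finite Character. Independence of a set and dimension $\dim(A)$ (cardinality of an independent $B\subseteq A$ with $A\subseteq\mathrm{cl}(B)$) are as usual; $\dim(A/C)$ is the dimension of $A$ in the pregeometry $(M,\mathrm{cl}_C)$, $\mathrm{cl}_C(X)=\mathrm{cl}(C\cup X)$. For $A,B,C\subseteq M$, $A$ is independent of $C$ over $B$ if $\dim(\vec a/B\cup C)=\dim(\vec a/B)$ for every finite tuple $\vec a$ from $A$. The pregeometry independence structure $\mathcal{S}_{(M,\mathrm{cl})}=(M,\perp)$ has $\mathbf{x}\perp\mathbf{y}$ iff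 $\mathbf{x}$ is independent of $\mathbf{y}$ over $\emptyset$. Properties: (P1) $\mathrm{cl}(\emptyset)\neq\emptyset$; (P2) for every finite independent $D_0\subseteq M$, $\mathrm{cl}(D_0)\neq\bigcup_{D\subsetneq D_0}\mathrm{cl}(D)$; (P3) $\dim(M)\ge\omega$. *)

(* Variables V = nat (a countably infinite set).
   Subsets of a type are predicates A -> Prop. *)
From Stdlib Require Import List Permutation.
Import ListNotations.
Set Implicit Arguments.

(* An atom  x ⊥ y  with x, y finite sequences of variables from V = nat. *)
Definition atom : Type := (list nat * list nat)%type.

Inductive derivable (Sigma : atom -> Prop) : atom -> Prop :=
| d_hyp : forall phi, Sigma phi -> derivable Sigma phi
| d_empty : forall x, derivable Sigma (x, [])
| d_sym : forall x y, derivable Sigma (x, y) -> derivable Sigma (y, x)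
| d_decomp : forall x y z,
    derivable Sigma (x, y ++ z) -> derivable Sigma (x, y)
| d_exch : forall x y z,
    derivable Sigma (x, y) -> derivable Sigma (x ++ y, z) ->
    derivable Sigma (x, y ++ z)
| d_const : forall (x : nat) y,
    derivable Sigma ([x], [x]) -> derivable Sigma ([x], y)
| d_perm : forall x y u v,
    derivable Sigma (x, y) -> Permutation x u -> Permutation y v ->
    derivable Sigma (u, v)
| d_dup : forall x (y : nat) z w,
    derivable Sigma (x ++ y :: z, w) -> derivable Sigma (x ++ y :: y :: z, w).

Definition finite_set {A : Type} (P : A -> Prop) : Prop :=
  exists l : list A, forall a, P a -> In a l.

Definition empty_set {A : Type} : A -> Prop := fun _ => False.
Definition union {A : Type} (P Q : A -> Prop) : A -> Prop := fun a => P a \/ Q a.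
Definition singleton {A : Type} (b : A) : A -> Prop := fun a => a = b.
Definition remove_pt {A : Type} (P : A -> Prop) (b : A) : A -> Prop :=
  fun a => P a /\ a <> b.
Definition subset {A : Type} (P Q : A -> Prop) : Prop := forall a, P a -> Q a.
Definition proper_subset {A : Type} (P Q : A -> Prop) : Prop :=
  subset P Q /\ exists a, Q a /\ ~ P a.
Definition set_of_list {A : Type} (l : list A) : A -> Prop := fun a => In a l.

(* A pair (I, ⊥); ⊥ is a binary relation on subsets of I (only its values on
   finite subsets matter, the axioms below only concern finite subsets). *)
Record IStruct : Type := mkIStruct {
  carrier : Type;
  perp : (carrier -> Prop) -> (carrier -> Prop) -> Prop
}.

Definition is_indep_structure (S : IStruct) : Prop :=
  inhabited (carrier S) /\
  (forall x, finite_set x -> perp S x empty_set) /\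
  (forall x y, finite_set x -> finite_set y -> perp S x y -> perp S y x) /\
  (forall x y z, finite_set x -> finite_set y -> finite_set z ->
     perp S x (union y z) -> perp S x y) /\
  (forall x y z, finite_set x -> finite_set y -> finite_set z ->
     perp S x y -> perp S (union x y) z -> perp S x (union y z)) /\
  (forall x y, finite_set x -> finite_set y -> perp S x x -> perp S x y).

Definition assign_img {I : Type} (s : nat -> I) (xs : list nat) : I -> Prop :=
  fun i => exists v, In v xs /\ s v = i.

Definition satisfies (S : IStruct) (s : nat -> carrier S) (phi : atom) : Prop :=
  perp S (assign_img s (fst phi)) (assign_img s (snd phi)).

Definition models (C : IStruct -> Prop) (Sigma : atom -> Prop) (phi : atom) : Prop :=
  forall S : IStruct, C S -> forall s : nat -> carrier S,
    (forall psi, Sigma psi -> satisfies S s psi) -> satisfies S s phi.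

Definition is_pregeometry {M : Type} (cl : (M -> Prop) -> (M -> Prop)) : Prop :=
  (forall A, subset A (cl A)) /\
  (forall A B, subset A B -> subset (cl A) (cl B)) /\
  (forall A a, cl (cl A) a <-> cl A a) /\
  (forall A a b, cl (union A (singleton b)) a -> ~ cl A a ->
     cl (union A (singleton a)) b) /\
  (forall A a, cl A a -> exists A0, finite_set A0 /\ subset A0 A /\ cl A0 a).

Definition cl_over {M : Type} (cl : (M -> Prop) -> (M -> Prop)) (C : M -> Prop)
  : (M -> Prop) -> (M -> Prop) := fun X => cl (union C X).

Definition independent {M : Type} (cl : (M -> Prop) -> (M -> Prop)) (B : M -> Prop)
  : Prop := forall a, B a -> ~ cl (remove_pt B a) a.

Definition dim_is {M : Type} (cl : (M -> Prop) -> (M -> Prop)) (A : M -> Prop)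
  (n : nat) : Prop :=
  exists b : list M, NoDup b /\ length b = n /\ subset (set_of_list b) A /\
    independent cl (set_of_list b) /\ subset A (cl (set_of_list b)).

Definition dim_over_is {M : Type} (cl : (M -> Prop) -> (M -> Prop)) (a : list M)
  (C : M -> Prop) (n : nat) : Prop :=
  dim_is (cl_over cl C) (set_of_list a) n.

Definition indep_over {M : Type} (cl : (M -> Prop) -> (M -> Prop))
  (A B C : M -> Prop) : Prop :=
  forall a : list M, subset (set_of_list a) A ->
    forall n, dim_over_is cl a (union B C) n <-> dim_over_is cl a B n.

Definition pregeom_struct (M : Type) (cl : (M -> Prop) -> (M -> Prop)) : IStruct :=
  @mkIStruct M (fun x y => indep_over cl x empty_set y).

Definition P1 {M : Type} (cl : (M -> Prop) -> (M -> Prop)) : Prop :=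
  exists m, cl empty_set m.

Definition P2 {M : Type} (cl : (M -> Prop) -> (M -> Prop)) : Prop :=
  forall D0 : M -> Prop, finite_set D0 -> independent cl D0 ->
    ~ (forall m, cl D0 m <-> exists D, proper_subset D D0 /\ cl D m).

(* (P3) dim(M) ≥ ω : M has an infinite basis (independent spanning set). *)
Definition P3 {M : Type} (cl : (M -> Prop) -> (M -> Prop)) : Prop :=
  exists B : M -> Prop, independent cl B /\ (forall m, cl B m) /\ ~ finite_set B.

(* Soundness is an induction on derivations: rules (a)-(g) are the axioms
   (I1)-(I5) read through the image map of an assignment.

   If x ⊥ y is not derivable, choose
   duplicate-free X ⊆ x, Y ⊆ y with X ⊥ Y underivable and minimal for
   |X| + |Y|.  Minimality forces two combinatorial facts about every derivable
   atom u ⊥ w: no variable of Z = X ++ Y occurs on both sides, and u ⊥ w cannot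
   split Z (cover Z while meeting it on both sides).  These are read off in
   S_(M,cl) through two kinds of countermodels, built from a non-loop e (from P3),
   a loop k0 (P1) and a circuit of size |X| + |Y| (an independent set from P3
   plus a minimally spanned point from P2):
   - X and Y share a variable, or |X| = |Y| = 1: send Z to e and all other
     variables to k0;
   - otherwise: send Z bijectively onto the circuit, X onto part of the
     independent set; each atom of Sigma misses a point of Z, hence lives in
     an independent subset of the circuit, while X ⊥ Y fails by exchange. *)

From Stdlib Require Import List Permutation Classical Arith Lia.
From Stdlib Require Import FunctionalExtensionality PropExtensionality.
Import ListNotations.

Definition memb (u : list nat) (z : nat) : bool :=
  if in_dec Nat.eq_dec z u then true else false.

Definition inter (l u : list nat) : list nat := filter (memb u) l.
Definition diff (l u : list nat) : list nat := filter (fun z => negb (memb u z)) l.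

Lemma memb_spec u z : memb u z = true <-> In z u.
Proof. unfold memb; destruct (in_dec Nat.eq_dec z u); split; congruence || tauto. Qed.

Lemma in_inter l u z : In z (inter l u) <-> In z l /\ In z u.
Proof. unfold inter; rewrite filter_In, memb_spec; tauto. Qed.

Lemma in_diff l u z : In z (diff l u) <-> In z l /\ ~ In z u.
Proof.
  unfold diff; rewrite filter_In, Bool.negb_true_iff, <- Bool.not_true_iff_false, memb_spec.
  tauto.
Qed.

Lemma length_inter_diff l u : length (inter l u) + length (diff l u) = length l.
Proof. apply filter_length. Qed.

Lemma NoDup_inter l u : NoDup l -> NoDup (inter l u).
Proof. apply NoDup_filter. Qed.

Lemma NoDup_diff l u : NoDup l -> NoDup (diff l u).
Proof. apply NoDup_filter. Qed.

Lemma incl_inter l u : incl (inter l u) l.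
Proof. intros z Hz; apply in_inter in Hz; tauto. Qed.

Lemma incl_diff l u : incl (diff l u) l.
Proof. intros z Hz; apply in_diff in Hz; tauto. Qed.

Lemma length_pos {A : Type} (l : list A) (a : A) : In a l -> 0 < length l.
Proof. destruct l; simpl; [tauto | lia]. Qed.

Lemma diff_length_lt l u z : In z l -> In z u -> length (diff l u) < length l.
Proof.
  intros Hl Hu. rewrite <- (length_inter_diff l u).
  pose proof (length_pos (inter l u) z (proj2 (in_inter l u z) (conj Hl Hu))). lia.
Qed.

Definition meets (Z l : list nat) : Prop := exists v, In v Z /\ In v l.

Section Derivations.
Variable Sigma : atom -> Prop.
Local Notation D := (derivable Sigma).

Lemma derivable_weaken_left x z w : D (x ++ z, w) -> D (x, w).
Proof. intro H. apply d_sym, d_decomp with z, d_sym, H. Qed.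

Lemma derivable_cons_member v l w : In v l -> D (l, w) -> D (v :: l, w).
Proof.
  intros Hv H. destruct (in_split v l Hv) as (l1 & l2 & ->).
  assert (Hp : Permutation (v :: l1 ++ l2) (l1 ++ v :: l2)) by apply Permutation_middle.
  assert (Hdup : D ([] ++ v :: v :: l1 ++ l2, w)).
  { apply d_dup. apply d_perm with (l1 ++ v :: l2) w; auto. now symmetry. }
  apply d_perm with (v :: v :: l1 ++ l2) w; auto.
Qed.

Lemma derivable_app_incl l u w : incl l u -> D (u, w) -> D (l ++ u, w).
Proof.
  induction l as [|v l IH]; intros Hl H; simpl; auto.
  apply incl_cons_inv in Hl as [Hv Hl].
  apply derivable_cons_member; auto. apply in_or_app; auto.
Qed.

Lemma derivable_incl_left u w u' : D (u, w) -> incl u' u -> D (u', w).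
Proof. intros H Hi. apply derivable_weaken_left with u, derivable_app_incl; auto. Qed.

Lemma derivable_incl u w u' w' : D (u, w) -> incl u' u -> incl w' w -> D (u', w').
Proof.
  intros H Hu Hw. apply derivable_incl_left with u; auto.
  apply d_sym, derivable_incl_left with w; auto. now apply d_sym.
Qed.

Lemma derivable_add_constant a b v : D (a, b) -> D ([v], [v]) -> D (a, b ++ [v]).
Proof. intros H Hv. apply d_exch; auto. apply d_sym, d_const, Hv. Qed.

Lemma derivable_combine A B C0 D0 :
  D (A ++ C0, B ++ D0) -> D (A, C0) -> D (B, D0) -> D (A ++ B, C0 ++ D0).
Proof.
  intros H HAC HBD.
  assert (HA : D (A, C0 ++ B ++ D0)) by (apply d_exch; auto).
  assert (HB : D (B, D0 ++ A ++ C0)) by (apply d_exch; auto; now apply d_sym).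
  assert (HCD_B : D (C0 ++ D0, B)).
  { apply d_sym, d_decomp with A, d_perm with B (D0 ++ A ++ C0); auto.
    rewrite app_assoc, <- (app_assoc C0 D0 A). apply Permutation_app_comm. }
  assert (HCDB_A : D ((C0 ++ D0) ++ B, A)).
  { apply d_sym, d_perm with A (C0 ++ B ++ D0); auto.
    rewrite <- app_assoc. apply Permutation_app_head, Permutation_app_comm. }
  apply d_sym, d_perm with (C0 ++ D0) (B ++ A); auto.
  - now apply d_exch.
  - apply Permutation_app_comm.
Qed.

Definition minimal (X Y : list nat) : Prop :=
  NoDup X /\ NoDup Y /\ ~ D (X, Y) /\
  forall X' Y', NoDup X' -> NoDup Y' -> incl X' X -> incl Y' Y ->
    length X' + length Y' < length X + length Y -> D (X', Y').

Lemma minimal_exists X Y : NoDup X -> NoDup Y -> ~ D (X, Y) ->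
  exists X0 Y0, incl X0 X /\ incl Y0 Y /\ minimal X0 Y0.
Proof.
  remember (length X + length Y) as n eqn:Hn. revert X Y Hn.
  induction n as [n IH] using lt_wf_ind; intros X Y Hn HX HY HD.
  destruct (classic (exists X' Y', NoDup X' /\ NoDup Y' /\ incl X' X /\ incl Y' Y /\
              length X' + length Y' < n /\ ~ D (X', Y')))
    as [(X' & Y' & HX' & HY' & HiX & HiY & Hlt & HD')|Hno].
  - destruct (IH _ Hlt X' Y' eq_refl HX' HY' HD') as (X0 & Y0 & H0X & H0Y & Hmin).
    exists X0, Y0. split; [|split]; auto; eapply incl_tran; eauto.
  - exists X, Y. split; [apply incl_refl|split; [apply incl_refl|]].
    repeat split; auto. intros X' Y' HX' HY' HiX HiY Hlt.
    apply NNPP. intro HD'. apply Hno. exists X', Y'. subst n. tauto.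
Qed.

(* No variable of a minimal atom is constant: otherwise it could be removed
   and added back by derivable_add_constant. *)
Lemma minimal_no_constant X Y v : minimal X Y -> In v (X ++ Y) -> ~ D ([v], [v]).
Proof.
  intros (HX & HY & HD & Hmin) Hv Hc. apply HD.
  assert (Hsplit : forall l, incl l (diff l [v] ++ [v])).
  { intros l z Hz. apply in_or_app. destruct (Nat.eq_dec z v) as [->|Hne].
    - right; left; auto.
    - left; apply in_diff; split; auto; intros [E|[]]; auto. }
  assert (Hv' : In v [v]) by (left; auto).
  apply in_app_or in Hv as [Hv|Hv].
  - assert (H : D (diff X [v], Y)).
    { apply Hmin; auto using NoDup_diff, incl_diff, incl_refl.
      pose proof (diff_length_lt X [v] v Hv Hv'). lia. }
    apply d_sym, derivable_add_constant with (v := v) in H; auto.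
    apply derivable_incl with (diff X [v] ++ [v]) Y; auto using incl_refl. now apply d_sym.
  - assert (H : D (X, diff Y [v])).
    { apply Hmin; auto using NoDup_diff, incl_diff, incl_refl.
      pose proof (diff_length_lt Y [v] v Hv Hv'). lia. }
    apply derivable_add_constant with (v := v) in H; auto.
    apply derivable_incl with X (diff Y [v] ++ [v]); auto using incl_refl.
Qed.

Lemma minimal_no_overlap X Y u w v : minimal X Y -> D (u, w) ->
  In v (X ++ Y) -> In v u -> In v w -> False.
Proof.
  intros Hmin Huw Hv Hu Hw. apply (minimal_no_constant X Y v Hmin Hv).
  apply derivable_incl with u w; auto; intros z [<-|[]]; auto.
Qed.

(* No derivable u ⊥ w splits a minimal X ⊥ Y: if u ∪ w covers X ∪ Y and
   both meet it, then with A, C the parts of X, Y inside u and B, D the parts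
   outside, derivable_combine would yield X ⊥ Y. *)
Lemma minimal_no_split X Y u w : minimal X Y -> D (u, w) -> incl (X ++ Y) (u ++ w) ->
  meets (X ++ Y) u -> meets (X ++ Y) w -> False.
Proof.
  intros Hmin Huw Hcov (v1 & Hv1 & Hu1) (v2 & Hv2 & Hw2).
  pose proof Hmin as (HX & HY & HD & Hsmall).
  assert (Hv2u : ~ In v2 u) by (intro Hu2; exact (minimal_no_overlap X Y u w v2 Hmin Huw Hv2 Hu2 Hw2)).
  assert (Hout : forall z, In z (diff X u ++ diff Y u) -> In z w).
  { intros z Hz.
    assert (HzZ : In z (X ++ Y) /\ ~ In z u).
    { rewrite in_app_iff. apply in_app_or in Hz as [Hz|Hz]; apply in_diff in Hz; tauto. }
    destruct HzZ as [HzZ Hzu]. apply Hcov, in_app_or in HzZ. tauto. }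
  pose proof (length_inter_diff X u). pose proof (length_inter_diff Y u).
  assert (Hin_pos : 0 < length (inter X u) + length (inter Y u)).
  { apply in_app_or in Hv1 as [Hv1|Hv1].
    - pose proof (length_pos (inter X u) v1 (proj2 (in_inter _ _ _) (conj Hv1 Hu1))). lia.
    - pose proof (length_pos (inter Y u) v1 (proj2 (in_inter _ _ _) (conj Hv1 Hu1))). lia. }
  assert (Hout_pos : 0 < length (diff X u) + length (diff Y u)).
  { apply in_app_or in Hv2 as [Hv2|Hv2].
    - pose proof (length_pos (diff X u) v2 (proj2 (in_diff _ _ _) (conj Hv2 Hv2u))). lia.
    - pose proof (length_pos (diff Y u) v2 (proj2 (in_diff _ _ _) (conj Hv2 Hv2u))). lia. }
  apply HD, derivable_incl with (inter X u ++ diff X u) (inter Y u ++ diff Y u).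
  - apply derivable_combine.
    + apply derivable_incl with u w; [exact Huw | | exact Hout].
      intros z Hz; apply in_app_or in Hz as [Hz|Hz]; apply in_inter in Hz; tauto.
    + apply Hsmall; auto using NoDup_inter, incl_inter; lia.
    + apply Hsmall; auto using NoDup_diff, incl_diff; lia.
  - intros z Hz. apply in_or_app. destruct (in_dec Nat.eq_dec z u);
      [left; apply in_inter | right; apply in_diff]; auto.
  - intros z Hz. apply in_or_app. destruct (in_dec Nat.eq_dec z u);
      [left; apply in_inter | right; apply in_diff]; auto.
Qed.

End Derivations.

Lemma pred_ext {A : Type} (P Q : A -> Prop) : (forall a, P a <-> Q a) -> P = Q.
Proof.
  intro H. apply functional_extensionality; intro a.
  apply propositional_extensionality, H.
Qed.

Section Soundness.
Variable S : IStruct.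
Variable s : nat -> carrier S.
Local Notation img := (assign_img s).

Lemma img_nil : img [] = empty_set.
Proof. apply pred_ext. intro a; unfold assign_img, empty_set; simpl; firstorder. Qed.

Lemma img_app x y : img (x ++ y) = union (img x) (img y).
Proof.
  apply pred_ext. intro a; unfold assign_img, union. setoid_rewrite in_app_iff. firstorder.
Qed.

Lemma img_perm x u : Permutation x u -> img x = img u.
Proof.
  intro P. apply pred_ext. intro a; unfold assign_img.
  split; intros (v & Hv & E); exists v; split; auto.
  - now apply Permutation_in with x.
  - apply Permutation_in with u; auto. now symmetry.
Qed.

Lemma img_dup x y z : img (x ++ y :: y :: z) = img (x ++ y :: z).
Proof.
  apply pred_ext. intro a; unfold assign_img. setoid_rewrite in_app_iff. simpl. firstorder.
Qed.

Lemma img_finite x : finite_set (img x).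
Proof. exists (map s x). intros a (v & Hv & <-). now apply in_map. Qed.

Theorem soundness (Sigma : atom -> Prop) : is_indep_structure S ->
  (forall psi, Sigma psi -> satisfies S s psi) ->
  forall phi, derivable Sigma phi -> satisfies S s phi.
Proof.
  intros (_ & I1 & I2 & I3 & I4 & I5) HSigma phi Hd. unfold satisfies in *.
  induction Hd; simpl in *; auto using img_finite.
  - rewrite img_nil. apply I1, img_finite.
  - rewrite img_app in IHHd. eapply I3; eauto using img_finite.
  - rewrite img_app. rewrite img_app in IHHd2. apply I4; auto using img_finite.
  - now rewrite <- (img_perm _ _ H), <- (img_perm _ _ H0).
  - now rewrite img_dup.
Qed.

End Soundness.

Section Labelling.
Variable A : Type.

Fixpoint lookup (ks : list nat) (es : list A) (d : A) (v : nat) : A :=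
  match ks, es with
  | k :: ks', e :: es' => if Nat.eqb k v then e else lookup ks' es' d v
  | _, _ => d
  end.

Lemma lookup_notin ks es d v : ~ In v ks -> lookup ks es d v = d.
Proof.
  revert es; induction ks as [|k ks IH]; intros [|e es] H; simpl; auto.
  destruct (Nat.eqb_spec k v) as [->|_]; [exfalso; apply H; left; auto|].
  apply IH. intro; apply H; right; auto.
Qed.

Lemma lookup_in ks es d v : length ks = length es -> In v ks -> In (lookup ks es d v) es.
Proof.
  revert es; induction ks as [|k ks IH]; intros [|e es] Hl H; simpl in *;
    try lia; try contradiction.
  destruct (Nat.eqb_spec k v); [left; auto | right].
  apply IH; [lia|]. destruct H; auto; contradiction.
Qed.

Lemma lookup_inj ks es d v1 v2 : length ks = length es -> NoDup es -> In v1 ks -> In v2 ks ->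
  lookup ks es d v1 = lookup ks es d v2 -> v1 = v2.
Proof.
  revert es; induction ks as [|k ks IH]; intros [|e es] Hl Hn H1 H2 E; simpl in *;
    try lia; try contradiction.
  apply NoDup_cons_iff in Hn as [Hn1 Hn2].
  destruct (Nat.eqb_spec k v1) as [K1|K1], (Nat.eqb_spec k v2) as [K2|K2]; try congruence.
  - exfalso. apply Hn1. rewrite E. apply lookup_in; [lia|]. destruct H2; auto; contradiction.
  - exfalso. apply Hn1. rewrite <- E. apply lookup_in; [lia|]. destruct H1; auto; contradiction.
  - apply (IH es); auto; [destruct H1 | destruct H2]; auto; contradiction.
Qed.

Lemma lookup_onto ks es d e : length ks = length es -> NoDup ks -> In e es ->
  exists v, In v ks /\ lookup ks es d v = e.
Proof.
  revert es; induction ks as [|k ks IH]; intros [|e' es] Hl Hn H; simpl in *;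
    try lia; try contradiction.
  apply NoDup_cons_iff in Hn as [Hn1 Hn2].
  destruct H as [<-|H].
  - exists k. rewrite Nat.eqb_refl. auto.
  - destruct (IH es) as (v & Hv & E); auto. exists v. split; auto.
    destruct (Nat.eqb_spec k v) as [->|_]; [contradiction | exact E].
Qed.

Lemma lookup_app_l ks1 ks2 es1 es2 d v : length ks1 = length es1 -> In v ks1 ->
  lookup (ks1 ++ ks2) (es1 ++ es2) d v = lookup ks1 es1 d v.
Proof.
  revert es1; induction ks1 as [|k ks IH]; intros [|e es] Hl H; simpl in *;
    try lia; try contradiction.
  destruct (Nat.eqb_spec k v); auto. apply IH; [lia|]. destruct H; auto. contradiction.
Qed.

Lemma lookup_app_r ks1 ks2 es1 es2 d v : length ks1 = length es1 -> ~ In v ks1 ->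
  lookup (ks1 ++ ks2) (es1 ++ es2) d v = lookup ks2 es2 d v.
Proof.
  revert es1; induction ks1 as [|k ks IH]; intros [|e es] Hl H; simpl in *; try lia; auto.
  destruct (Nat.eqb_spec k v); [exfalso; auto|]. apply IH; [lia|]. auto.
Qed.

Lemma bijective_labelling (X Y : list nat) (e1 e2 : list A) (d : A) :
  NoDup X -> NoDup Y -> (forall v, In v X -> ~ In v Y) -> NoDup (e1 ++ e2) ->
  length X = length e1 -> length Y = length e2 ->
  exists s : nat -> A,
    (forall v, ~ In v (X ++ Y) -> s v = d) /\
    (forall v, In v (X ++ Y) -> In (s v) (e1 ++ e2)) /\
    (forall v1 v2, In v1 (X ++ Y) -> In v2 (X ++ Y) -> s v1 = s v2 -> v1 = v2) /\
    (forall a, In a e1 -> exists v, In v X /\ s v = a) /\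
    (forall a, In a e2 -> exists v, In v Y /\ s v = a).
Proof.
  intros HX HY Hdis Hes H1 H2.
  assert (Hlen : length (X ++ Y) = length (e1 ++ e2)) by (rewrite !length_app; lia).
  exists (lookup (X ++ Y) (e1 ++ e2) d). split; [|split; [|split; [|split]]].
  - apply lookup_notin.
  - intros v Hv. apply lookup_in; auto.
  - intros v1 v2 Hv1 Hv2. apply lookup_inj; auto.
  - intros a Ha. destruct (lookup_onto X e1 d a) as (v & Hv & E); auto.
    exists v. split; auto. rewrite lookup_app_l; auto.
  - intros a Ha. destruct (lookup_onto Y e2 d a) as (v & Hv & E); auto.
    exists v. split; auto. rewrite lookup_app_r; auto. intro; eapply Hdis; eauto.
Qed.

End Labelling.

Definition refutes (S : IStruct) (Sigma : atom -> Prop) (phi : atom) : Prop :=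
  exists s : nat -> carrier S,
    (forall psi, Sigma psi -> satisfies S s psi) /\ ~ satisfies S s phi.

Lemma not_models_of_refutes C S Sigma phi : C S -> refutes S Sigma phi -> ~ models C Sigma phi.
Proof. intros HS (s & Hsat & Hphi) Hm. exact (Hphi (Hm S HS s Hsat)). Qed.

(* Independence in a pregeometry, and the countermodels. *)
Section Pregeometry.
Variable M : Type.
Variable cl : (M -> Prop) -> (M -> Prop).
Hypothesis cl_ext : forall A, subset A (cl A).
Hypothesis cl_mono : forall A B, subset A B -> subset (cl A) (cl B).
Hypothesis cl_idem : forall A a, cl (cl A) a <-> cl A a.
Hypothesis cl_exch : forall A a b, cl (union A (singleton b)) a -> ~ cl A a ->
  cl (union A (singleton a)) b.

Local Notation loop := (cl empty_set).

Lemma cl_sub_cl A B : subset A (cl B) -> subset (cl A) (cl B).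
Proof. intros H x Hx. apply cl_idem. eapply cl_mono; eauto. Qed.

Lemma loop_in_cl A x : loop x -> cl A x.
Proof. apply cl_mono. intros y []. Qed.

Lemma independent_not_loop B e : independent cl B -> B e -> ~ loop e.
Proof. intros HB He Hl. apply (HB e He), loop_in_cl, Hl. Qed.

Lemma independent_subset A B : independent cl B -> subset A B -> independent cl A.
Proof.
  intros HB HAB e He Hcl. apply (HB e (HAB e He)). revert Hcl. apply cl_mono.
  intros y [Hy Hne]. split; auto.
Qed.

Lemma not_in_cl_avoiding D e Y : independent cl D -> D e ->
  subset Y (fun d => (D d /\ d <> e) \/ loop d) -> ~ cl Y e.
Proof.
  intros HD He HY Hc. apply (HD e He). revert Hc. apply cl_sub_cl.
  intros d Hd. destruct (HY d Hd) as [Hd'|Hl]; [apply cl_ext, Hd' | apply loop_in_cl, Hl].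
Qed.

(* Since dimension is defined through bases, U is independent of W when,
   for tuples a from U, the candidate bases of a over ∅ and over W agree. *)
Lemma indep_over_of_bases_agree (U W : M -> Prop) :
  (forall a b : list M, subset (set_of_list a) U ->
     subset (set_of_list b) (set_of_list a) ->
     (independent (cl_over cl (union empty_set W)) (set_of_list b) <->
      independent (cl_over cl empty_set) (set_of_list b)) /\
     (subset (set_of_list a) (cl_over cl (union empty_set W) (set_of_list b)) <->
      subset (set_of_list a) (cl_over cl empty_set (set_of_list b)))) ->
  indep_over cl U empty_set W.
Proof.
  intros Hagree a Ha n.
  split; intros (b & Hnd & Hlen & Hb & Hind & Hspan); exists b;
    destruct (Hagree a b Ha Hb) as [Ei Es]; repeat split; auto;
    solve [apply Ei; auto | apply Es; auto].
Qed.

Lemma indep_over_loops_right (U W : M -> Prop) : subset W loop -> indep_over cl U empty_set W.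
Proof.
  intro HW.
  assert (E : cl_over cl (union empty_set W) = cl_over cl empty_set).
  { apply functional_extensionality; intro X. apply pred_ext; intro x; split.
    - apply cl_sub_cl. intros y [[[]|Hy]|Hy].
      + apply loop_in_cl, HW, Hy.
      + apply cl_ext; right; exact Hy.
    - apply cl_mono. intros y [[]|Hy]. right; exact Hy. }
  intros a _ n. unfold dim_over_is. now rewrite E.
Qed.

Lemma indep_over_loops_left (U W : M -> Prop) : subset U loop -> indep_over cl U empty_set W.
Proof.
  intro HU. apply indep_over_of_bases_agree. intros a b Ha Hb.
  split; split; intros H.
  - intros e He. exfalso. apply (H e He), loop_in_cl, HU, Ha, Hb, He.
  - intros e He. exfalso. apply (H e He), loop_in_cl, HU, Ha, Hb, He.
  - intros t Ht. apply loop_in_cl, HU, Ha, Ht.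
  - intros t Ht. apply loop_in_cl, HU, Ha, Ht.
Qed.

Lemma indep_over_separated (U W D : M -> Prop) : independent cl D ->
  subset U (fun d => D d \/ loop d) -> subset W (fun d => D d \/ loop d) ->
  (forall d, D d -> U d -> W d -> False) -> indep_over cl U empty_set W.
Proof.
  intros HD HUD HWD Hsep. apply indep_over_of_bases_agree. intros a b Ha Hb. split.
  - destruct (classic (exists e, set_of_list b e /\ loop e)) as [(e & He & Hl)|Hnl].
    { split; intro H; exfalso; apply (H e He), loop_in_cl, Hl. }
    assert (HbD : forall e, set_of_list b e -> D e /\ U e).
    { intros e He. assert (Ue : U e) by (apply Ha, Hb, He).
      destruct (HUD e Ue) as [De|Hl]; [auto | exfalso; eauto]. }
    assert (Hfree : forall C, subset C W -> independent (cl_over cl C) (set_of_list b)).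
    { intros C HC e He. destruct (HbD e He) as [De Ue].
      apply (not_in_cl_avoiding D); auto. intros d [Hd|[Hdb Hne]].
      - destruct (HWD d (HC d Hd)) as [Dd|Hl]; [left; split; auto | right; auto].
        intros ->. eauto.
      - left; split; auto. apply HbD, Hdb. }
    split; intros _; apply Hfree; [intros y [] | intros y [[]|Hy]; exact Hy].
  - split; intros H t Ht.
    + specialize (H t Ht).
      destruct (classic (loop t)) as [Hl|Hnl]; [now apply loop_in_cl|].
      destruct (classic (set_of_list b t)) as [Htb|Htb]; [apply cl_ext; right; exact Htb|].
      exfalso. assert (Ut : U t) by (apply Ha, Ht).
      assert (Dt : D t) by (destruct (HUD t Ut); tauto).
      revert H. apply (not_in_cl_avoiding D); auto. intros d [[[]|Hd]|Hd].
      * destruct (HWD d Hd) as [Dd|Hl]; [left; split; auto | right; auto]. intros ->; eauto.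
      * assert (Ud : U d) by (apply Ha, Hb, Hd).
        destruct (HUD d Ud) as [Dd|Hl]; [left; split; auto | right; auto]. intros ->; auto.
    + eapply cl_mono; [|apply H, Ht]. intros y [[]|Hy]; right; exact Hy.
Qed.

(* A common non-loop element makes U and W dependent: it has dimension 1
   over ∅ but 0 over W. *)
Lemma not_indep_over_shared (U W : M -> Prop) e :
  U e -> W e -> ~ loop e -> ~ indep_over cl U empty_set W.
Proof.
  intros HU HW He H.
  assert (Hdim : dim_over_is cl [e] (union empty_set W) 0).
  { exists []. split; [constructor|]. split; [reflexivity|].
    split; [intros y []|]. split; [intros y []|].
    intros y [<-|[]]. apply cl_ext. left; right; exact HW. }
  apply (H [e]) in Hdim as (b & _ & Hlen & _ & _ & Hspan); [|intros y [<-|[]]; exact HU].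
  destruct b; [|discriminate]. apply He.
  specialize (Hspan e (or_introl eq_refl)). revert Hspan.
  apply cl_mono. intros y [[]|[]].
Qed.

(* c is spanned by dl but by no proper subset: dl together with c is a
   circuit. *)
Definition minimally_spans (dl : list M) (c : M) : Prop :=
  cl (set_of_list dl) c /\ forall D, proper_subset D (set_of_list dl) -> ~ cl D c.

Lemma exchange_into_span dl c e : minimally_spans dl c -> In e dl ->
  cl (union (remove_pt (set_of_list dl) e) (singleton c)) e.
Proof.
  intros [Hc Hmin] He. apply cl_exch.
  - revert Hc. apply cl_mono. intros y Hy.
    destruct (classic (y = e)) as [->|Hne]; [right; reflexivity | left; split; auto].
  - apply Hmin. split; [intros y [Hy _]; exact Hy|].
    exists e. split; auto. intros [_ Hne]; auto.
Qed.

(* If a nonempty part d1 of the circuit lies in U and the rest (with c) in W,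
   then U and W are dependent: d1 has dimension |d1| over ∅, but over W
   each of its points is spanned by the others (exchange_into_span). *)
Lemma not_indep_over_circuit (d1 d2 : list M) c (U W : M -> Prop) :
  NoDup (d1 ++ d2) -> independent cl (set_of_list (d1 ++ d2)) ->
  minimally_spans (d1 ++ d2) c -> d1 <> [] ->
  subset (set_of_list d1) U -> subset (set_of_list (d2 ++ [c])) W ->
  ~ indep_over cl U empty_set W.
Proof.
  intros Hnd Hind Hspan Hne HU HW H.
  assert (Hnd1 : NoDup d1) by (eapply NoDup_app_remove_r; eauto).
  assert (Hdim : dim_over_is cl d1 empty_set (length d1)).
  { exists d1. repeat split; auto; try (intros y Hy; exact Hy).
    - intros e He Hcl. apply (Hind e (in_or_app _ _ _ (or_introl He))).
      revert Hcl. apply cl_mono. intros y [[]|[Hy Hye]]. split; auto. apply in_or_app; auto.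
    - intros y Hy. apply cl_ext. right; exact Hy. }
  apply (proj2 (H d1 HU (length d1))) in Hdim as (b & Hndb & Hlen & Hb & Hindb & _).
  destruct d1 as [|e d1']; [congruence|].
  assert (Hinc : incl (e :: d1') b) by (apply NoDup_length_incl; auto; lia).
  apply (Hindb e (Hinc e (or_introl eq_refl))).
  eapply cl_mono; [|apply (exchange_into_span _ c e Hspan); left; auto].
  intros y [[Hy Hye] | ->].
  - apply in_app_or in Hy as [Hy|Hy].
    + right; split; auto. apply Hinc, Hy.
    + left; right. apply HW, in_or_app; left; exact Hy.
  - left; right. apply HW, in_or_app; right; left; auto.
Qed.

Lemma minimally_spanned_exists dl : P2 cl -> independent cl (set_of_list dl) ->
  exists c, minimally_spans dl c.
Proof.
  intros HP2 Hind. apply NNPP. intro Hnone. apply (HP2 (set_of_list dl)); auto.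
  { exists dl; auto. }
  intro m. split.
  - intro Hm. apply NNPP. intro Hno. apply Hnone. exists m. split; auto.
    intros D HD HcD. apply Hno. eauto.
  - intros (D & [HD _] & HcD). revert HcD. apply cl_mono, HD.
Qed.

Lemma minimally_spanned_fresh dl c : NoDup dl -> 2 <= length dl ->
  minimally_spans dl c -> ~ In c dl.
Proof.
  intros Hnd Hlen [_ Hmin] Hc.
  assert (Hother : exists e, In e dl /\ e <> c).
  { destruct dl as [|a1 [|a2 dl']]; simpl in Hlen; try lia.
    apply NoDup_cons_iff in Hnd as [Ha12 _].
    destruct (classic (a1 = c)) as [->|Hne].
    - exists a2. split; [right; left; auto | intros ->; apply Ha12; left; auto].
    - exists a1. split; [left|]; auto. }
  destruct Hother as (e & He & Hne).
  apply (Hmin (remove_pt (set_of_list dl) e)).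
  - split; [intros y [Hy _]; exact Hy|]. exists e. split; auto. intros [_ H]; auto.
  - apply cl_ext. split; auto.
Qed.

Lemma circuit_minus_point_independent dl c e0 :
  independent cl (set_of_list dl) -> minimally_spans dl c -> ~ In c dl ->
  In e0 (dl ++ [c]) -> independent cl (remove_pt (set_of_list (dl ++ [c])) e0).
Proof.
  intros Hind Hspan Hcn He0.
  assert (Hproper : proper_subset (remove_pt (set_of_list dl) e0) (set_of_list dl)
                    \/ e0 = c).
  { apply in_app_or in He0 as [He0|[<-|[]]]; [left|right; reflexivity].
    split; [intros y [Hy _]; exact Hy|]. exists e0. split; auto. intros [_ H]; auto. }
  destruct Hproper as [Hproper | ->].
  - intros a [Ha Hae] Hcl. apply in_app_or in Ha as [Ha|[<-|[]]].
    + set (A := fun d => In d dl /\ d <> e0 /\ d <> a).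
      assert (Hca : cl (union A (singleton c)) a).
      { revert Hcl. apply cl_mono. intros y [[Hy Hye] Hya].
        apply in_app_or in Hy as [Hy|[<-|[]]]; [left; repeat split; auto | right; reflexivity]. }
      assert (Hna : ~ cl A a).
      { intro H. apply (Hind a Ha). revert H. apply cl_mono.
        intros y (Hy & _ & Hya). split; auto. }
      apply (proj2 Hspan _ Hproper).
      generalize (cl_exch A a c Hca Hna). apply cl_mono.
      intros y [(Hy & Hye & _) | ->]; split; auto.
    + apply (proj2 Hspan _ Hproper). revert Hcl. apply cl_mono.
      intros y [[Hy Hye] Hyc]. apply in_app_or in Hy as [Hy|[<-|[]]]; [split|]; auto.
      congruence.
  - apply (independent_subset _ (set_of_list dl) Hind).
    intros d [Hd Hdc]. apply in_app_or in Hd as [Hd|[<-|[]]]; [exact Hd | congruence].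
Qed.

Lemma independent_lists_of_infinite (B : M -> Prop) : ~ finite_set B ->
  forall n, exists dl, NoDup dl /\ length dl = n /\ subset (set_of_list dl) B.
Proof.
  intros Hinf n. induction n as [|n (dl & Hnd & Hlen & HB)].
  - exists []. repeat split; [constructor | intros y []].
  - assert (Hnew : exists a, B a /\ ~ In a dl).
    { apply NNPP. intro Hno. apply Hinf. exists dl. intros a Ba.
      apply NNPP. intro Ha. apply Hno; eauto. }
    destruct Hnew as (a & Ba & Ha).
    exists (a :: dl). repeat split; simpl; auto.
    + now constructor.
    + intros y [<-|Hy]; auto.
Qed.

(* A loop, provided by (P1), receives all irrelevant variables. *)
Variable k0 : M.
Hypothesis k0_loop : loop k0.

Lemma loop_image (s : nat -> M) (Z l : list nat) :
  (forall v, ~ In v Z -> s v = k0) -> ~ meets Z l -> subset (assign_img s l) loop.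
Proof.
  intros Hout Hl _ (v & Hv & <-). rewrite Hout; [exact k0_loop|].
  intro HvZ. apply Hl. exists v; auto.
Qed.

(* Point countermodel: send Z to a non-loop e and the rest to k0. Atoms of
   Sigma meeting Z on at most one side hold; x ⊥ y, meeting Z on both sides,
   fails. *)
Lemma refutes_by_point (Sigma : atom -> Prop) (e : M) (Z x y : list nat) : ~ loop e ->
  (forall u w, Sigma (u, w) -> ~ (meets Z u /\ meets Z w)) ->
  meets Z x -> meets Z y -> refutes (@pregeom_struct M cl) Sigma (x, y).
Proof.
  intros He HSigma (v1 & Hv1 & Hx1) (v2 & Hv2 & Hy2).
  set (s := fun v => if in_dec Nat.eq_dec v Z then e else k0).
  assert (Hs : forall v, (In v Z /\ s v = e) \/ (~ In v Z /\ s v = k0)).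
  { intro v; unfold s; destruct (in_dec Nat.eq_dec v Z); tauto. }
  assert (Hs_e : forall v, s v = e -> In v Z).
  { intros v E. destruct (Hs v) as [[H _]|[_ E']]; [exact H | congruence]. }
  assert (Himg : forall l, subset (assign_img s l) (fun d => singleton e d \/ loop d)).
  { intros l _ (v & _ & <-). destruct (Hs v) as [[_ ->]|[_ ->]]; [left|right]; auto.
    reflexivity. }
  exists s. split.
  - intros [u w] Hp. apply indep_over_separated with (singleton e); auto.
    + intros a -> Hcl. apply He. revert Hcl. apply cl_mono. intros y0 [-> Hne]. congruence.
    + intros d -> (u1 & Hu1 & E1) (w1 & Hw1 & E2).
      apply (HSigma u w Hp). split; [exists u1 | exists w1]; auto.
  - apply not_indep_over_shared with e; auto.
    + exists v1. split; auto. destruct (Hs v1); tauto.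
    + exists v2. split; auto. destruct (Hs v2); tauto.
Qed.

(* Circuit countermodel, positive part: if Z is labelled bijectively by a
   circuit, every atom u ⊥ w that does not split Z and has no variable of Z on
   both sides holds (some point of Z is missed, and the remaining labels are
   independent). *)
Lemma circuit_labelling_satisfies (es : list M) (Z u w : list nat) (s : nat -> M) :
  (forall e0, In e0 es -> independent cl (remove_pt (set_of_list es) e0)) ->
  (forall d, In d es -> ~ loop d) ->
  (forall v, ~ In v Z -> s v = k0) -> (forall v, In v Z -> In (s v) es) ->
  (forall v1 v2, In v1 Z -> In v2 Z -> s v1 = s v2 -> v1 = v2) ->
  (forall v, In v Z -> In v u -> In v w -> False) ->
  ~ (incl Z (u ++ w) /\ meets Z u /\ meets Z w) ->
  indep_over cl (assign_img s u) empty_set (assign_img s w).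
Proof.
  intros Hcirc Hnl Hout Hin Hinj Hsep Hsplit.
  destruct (classic (meets Z w)) as [Hw|Hw];
    [|apply indep_over_loops_right, (loop_image s Z); auto].
  destruct (classic (meets Z u)) as [Hu|Hu];
    [|apply indep_over_loops_left, (loop_image s Z); auto].
  assert (Hfree : exists z0, In z0 Z /\ ~ In z0 u /\ ~ In z0 w).
  { apply NNPP. intro Hno. apply Hsplit. repeat split; auto.
    intros z Hz. apply in_or_app. apply NNPP. intro Hzn. apply Hno. exists z. tauto. }
  destruct Hfree as (z0 & Hz0 & Hz0u & Hz0w).
  assert (Hcover : forall l, ~ In z0 l ->
    subset (assign_img s l) (fun d => remove_pt (set_of_list es) (s z0) d \/ loop d)).
  { intros l Hl _ (v & Hv & <-). destruct (in_dec Nat.eq_dec v Z) as [HvZ|HvZ].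
    - left. split; [apply Hin, HvZ|]. intro E. apply Hinj in E; auto. congruence.
    - right. rewrite Hout; auto. }
  assert (Hlabel : forall v d, s v = d -> In d es -> In v Z).
  { intros v d E Hd. apply NNPP. intro HvZ. rewrite Hout in E; auto. subst d.
    exact (Hnl k0 Hd k0_loop). }
  apply indep_over_separated with (remove_pt (set_of_list es) (s z0)); auto.
  intros d [Hd _] (v1 & Hv1 & E1) (v2 & Hv2 & E2).
  assert (HZ1 : In v1 Z) by (apply (Hlabel v1 d); auto).
  assert (HZ2 : In v2 Z) by (apply (Hlabel v2 d); auto).
  assert (E : v1 = v2) by (apply Hinj; congruence).
  subst v2. exact (Hsep v1 HZ1 Hv1 Hv2).
Qed.

(* Circuit countermodel: label X by the first |X| points of an independent
   list dl of size |X| + |Y| - 1 and Y by the remaining ones together with a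
   point c minimally spanned by dl. *)
Lemma refutes_by_circuit (Sigma : atom -> Prop) (X Y x y : list nat) (dl : list M) c :
  NoDup X -> NoDup Y -> (forall v, In v X -> ~ In v Y) -> X <> [] -> Y <> [] ->
  incl X x -> incl Y y ->
  NoDup dl -> length dl = length X + length Y - 1 -> 2 <= length dl ->
  independent cl (set_of_list dl) -> minimally_spans dl c ->
  (forall u w, Sigma (u, w) ->
     (forall v, In v (X ++ Y) -> In v u -> In v w -> False) /\
     ~ (incl (X ++ Y) (u ++ w) /\ meets (X ++ Y) u /\ meets (X ++ Y) w)) ->
  refutes (@pregeom_struct M cl) Sigma (x, y).
Proof.
  intros HX HY Hdis HX0 HY0 Hx Hy Hnd Hlen Hlen2 Hind Hspan HSigma.
  assert (HY1 : length Y <> 0) by (rewrite length_zero_iff_nil; exact HY0).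
  assert (Hfresh : ~ In c dl) by (apply minimally_spanned_fresh; auto).
  set (d1 := firstn (length X) dl). set (d2 := skipn (length X) dl).
  assert (Hdl : dl = d1 ++ d2) by (symmetry; apply firstn_skipn).
  assert (Hd1 : length X = length d1) by (symmetry; apply firstn_length_le; lia).
  assert (Hd2 : length Y = length (d2 ++ [c])).
  { unfold d2. rewrite length_app, length_skipn. simpl. lia. }
  clearbody d1 d2.
  assert (Hes : d1 ++ d2 ++ [c] = dl ++ [c]) by (rewrite Hdl, app_assoc; reflexivity).
  assert (Hnd_es : NoDup (dl ++ [c])).
  { apply NoDup_app; auto using NoDup_cons, NoDup_nil. intros a Ha [<-|[]]; auto. }
  assert (Hnl : forall d, In d (dl ++ [c]) -> ~ loop d).
  { intros d Hd. apply in_app_or in Hd as [Hd|[<-|[]]].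
    - exact (independent_not_loop _ _ Hind Hd).
    - apply (proj2 Hspan). split; [intros a []|].
      destruct dl as [|a dl']; simpl in Hlen2; [lia|]. exists a. split; [left|]; auto. }
  destruct (bijective_labelling M X Y d1 (d2 ++ [c]) k0) as (s & Hout & Hin & Hinj & Hon1 & Hon2);
    auto; [rewrite Hes; exact Hnd_es|].
  rewrite Hes in Hin.
  exists s. split.
  - intros [u w] Hp. destruct (HSigma u w Hp) as [Hsep Hsplit].
    apply circuit_labelling_satisfies with (dl ++ [c]) (X ++ Y); auto.
    intros e0 He0. apply circuit_minus_point_independent; auto.
  - rewrite Hdl in Hnd, Hind, Hspan.
    apply not_indep_over_circuit with d1 d2 c; auto.
    + intro E. apply HX0. apply length_zero_iff_nil. rewrite Hd1, E. reflexivity.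
    + intros a Ha. destruct (Hon1 a Ha) as (v & Hv & <-). exists v; auto.
    + intros a Ha. destruct (Hon2 a Ha) as (v & Hv & <-). exists v; auto.
Qed.

(* A minimal underivable a ⊥ b with a <> b is refuted by sending a and b to the
   same non-loop: an atom of Sigma meeting {a, b} on both sides would derive
   one of a ⊥ a, b ⊥ b, a ⊥ b, b ⊥ a. *)
Lemma refutes_minimal_pair (Sigma : atom -> Prop) (a b : nat) (x y : list nat) (e : M) :
  ~ loop e -> minimal Sigma [a] [b] -> In a x -> In b y ->
  refutes (@pregeom_struct M cl) Sigma (x, y).
Proof.
  intros He Hmin Ha Hb. pose proof Hmin as (_ & _ & HD & _).
  apply refutes_by_point with e [a; b]; auto.
  - intros u w Hp [(v1 & Hv1 & Hu) (v2 & Hv2 & Hw)].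
    assert (Hd : derivable Sigma ([v1], [v2])).
    { apply derivable_incl with u w; [apply d_hyp, Hp | |]; intros z [<-|[]]; auto. }
    destruct Hv1 as [<-|[<-|[]]], Hv2 as [<-|[<-|[]]];
      solve [ apply HD, Hd | apply HD, d_sym, Hd
            | eapply (minimal_no_constant _ _ _ _ Hmin); [|exact Hd]; simpl; auto ].
  - exists a; split; [left|]; auto.
  - exists b; split; [right; left|]; auto.
Qed.

(* A minimal underivable X ⊥ Y inside x ⊥ y yields a refutation of x ⊥ y:
   by a point countermodel if X, Y overlap or are singletons, by a circuit
   countermodel otherwise. *)
Lemma refutes_minimal (Sigma : atom -> Prop) (X Y x y : list nat) :
  P2 cl -> P3 cl -> minimal Sigma X Y -> incl X x -> incl Y y ->
  refutes (@pregeom_struct M cl) Sigma (x, y).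
Proof.
  intros HP2 (B & HBind & _ & HBinf) Hmin Hx Hy.
  pose proof Hmin as (HX & HY & HD & _).
  assert (HBe : exists e, B e).
  { apply NNPP. intro Hno. apply HBinf. exists []. intros a Ha. apply Hno; eauto. }
  destruct HBe as [e HBe].
  assert (He : ~ loop e) by exact (independent_not_loop B e HBind HBe).
  destruct (classic (exists v, In v X /\ In v Y)) as [(v & HvX & HvY)|Hdis].
  { apply refutes_by_point with e [v]; auto.
    - intros u w Hp [(v1 & [<-|[]] & Hu) (v2 & [<-|[]] & Hw)].
      exact (minimal_no_overlap Sigma X Y u w v Hmin (d_hyp _ _ Hp)
               (in_or_app _ _ _ (or_introl HvX)) Hu Hw).
    - exists v; split; [left|apply Hx]; auto.
    - exists v; split; [left|apply Hy]; auto. }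
  assert (HX0 : X <> []) by (intros ->; apply HD, d_sym, d_empty).
  assert (HY0 : Y <> []) by (intros ->; apply HD, d_empty).
  destruct (classic (length X + length Y = 2)) as [Hpair|Hlarge].
  { destruct X as [|a [|a' X']], Y as [|b [|b' Y']]; simpl in Hpair; try congruence; try lia.
    apply (refutes_minimal_pair Sigma a b x y e); auto; [apply Hx | apply Hy]; left; auto. }
  assert (HXl : length X <> 0) by (rewrite length_zero_iff_nil; exact HX0).
  assert (HYl : length Y <> 0) by (rewrite length_zero_iff_nil; exact HY0).
  destruct (independent_lists_of_infinite B HBinf (length X + length Y - 1))
    as (dl & Hnd & Hlen & HdlB).
  assert (Hind : independent cl (set_of_list dl)) by exact (independent_subset _ _ HBind HdlB).
  destruct (minimally_spanned_exists dl HP2 Hind) as [c Hspan].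
  apply refutes_by_circuit with X Y dl c; auto; try lia.
  - intros v HvX HvY. apply Hdis; eauto.
  - intros u w Hp. split.
    + intros v. exact (minimal_no_overlap Sigma X Y u w v Hmin (d_hyp _ _ Hp)).
    + intros (Hcov & Hu & Hw).
      exact (minimal_no_split Sigma X Y u w Hmin (d_hyp _ _ Hp) Hcov Hu Hw).
Qed.

Lemma completeness_pregeometry (Sigma : atom -> Prop) (x y : list nat) :
  P2 cl -> P3 cl -> ~ derivable Sigma (x, y) -> refutes (@pregeom_struct M cl) Sigma (x, y).
Proof.
  intros HP2 HP3 Hnd.
  assert (Hsame : forall l, incl l (nodup Nat.eq_dec l) /\ incl (nodup Nat.eq_dec l) l).
  { intro l; split; intro z; apply nodup_In. }
  assert (Hnd' : ~ derivable Sigma (nodup Nat.eq_dec x, nodup Nat.eq_dec y)).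
  { intro H. apply Hnd, derivable_incl with (nodup Nat.eq_dec x) (nodup Nat.eq_dec y);
      [exact H | apply Hsame | apply Hsame]. }
  destruct (minimal_exists Sigma _ _ (NoDup_nodup _ x) (NoDup_nodup _ y) Hnd')
    as (X & Y & HXx & HYy & Hmin).
  apply refutes_minimal with X Y; auto; eapply incl_tran; eauto; apply Hsame.
Qed.

End Pregeometry.

Theorem theorem3 :
  forall (C : IStruct -> Prop) (M : Type) (cl : (M -> Prop) -> (M -> Prop)),
    (forall S, C S -> is_indep_structure S) ->
    is_pregeometry cl -> P1 cl -> P2 cl -> P3 cl ->
    C (@pregeom_struct M cl) ->
    forall (Sigma : atom -> Prop) (phi : atom),
      derivable Sigma phi <-> models C Sigma phi.
Proof.
  intros C M cl HCs Hpg HP1 HP2 HP3 HC Sigma [x y]. split.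
  - intros Hd S HS s HSigma. exact (soundness S s Sigma (HCs S HS) HSigma (x, y) Hd).
  - intros Hm. apply NNPP. intro Hnd.
    destruct Hpg as (cl_ext & cl_mono & cl_idem & cl_exch & _).
    destruct HP1 as [k0 Hk0].
    apply (not_models_of_refutes C _ Sigma (x, y) HC); [|exact Hm].
    exact (completeness_pregeometry M cl cl_ext cl_mono cl_idem cl_exch k0 Hk0
             Sigma x y HP2 HP3 Hnd).
Qed.
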